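(* Let $T$ be a free simplicial $F_r$-tree in unprojectivized outer space and let $F\colon T\to T_+$ be a $\Lambda$-isometry. Let $d_0,\dots,d_m$ be directions at a common vertex of $T$ lying in a common gate (for the gate structure induced by $F$). Then $$\min_{i=1,\dots,m}\ell(\{d_{i-1},d_i\})\le \ell(\{d_0,d_m\}).$$
   Context: $F_r$ is the free group of rank $r\ge 3$ and $\varphi\in\mathrm{Out}(F_r)$ is nongeometric fully irreducible (no positive power of $\varphi$ preserves the conjugacy class of a nontrivial proper free factor, and $\varphi$ is not induced by a surface homeomorphism). Unprojectivized outer space $\widehat{CV}_r$ is the set of free, minimal, simplicial isometric actions of $F_r$ on metric simplicial trees (universal covers of marked metric graphs), up to equivariant isometry. $T_+$ is a fixed $\mathbb{R}$-tree representing the attracting point of $\varphi$ in $\partial CV_r$, and $\Lambda$ is the attracting lamination of $\varphi$, an $F_r$-invariant family of lines which, for any $T\in\widehat{CV}_r$, is realized by bi-infinite geodesics in $T$ (via $\partial T\cong\partial F_r$). A $\Lambda$-isometry on $T$ is an $F_r$-equivariant continuous map $T\to T_+$ whose restriction to each realized leaf of $\Lambda$ is an isometry onto a bi-infinite geodesic of $T_+$. A direction at a vertex $v$ is a germ of an edge issuing from $v$; a turn is an unordered pair of directions at the same vertex. For a turn $\{d_1,d_2\}$ with $d_i$ the initial direction of the edge $e_i$, $\ell(\{d_1,d_2\})$ is the length of the longest initial segments of $e_1$ and $e_2$ having the same image under $F$ (and $\ell(\{d,d\})=+\infty$ by convention); the turn is illegal if this length is positive. Gates at $v$ are the equivalence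 classes of directions at $v$ under the equivalence relation generated by illegal turns. *)

From HB Require Import structures.
From mathcomp Require Import all_boot all_order all_algebra.
From mathcomp Require Import boolp classical_sets reals ereal.
From Stdlib Require Import Relations.
Set Implicit Arguments. Unset Strict Implicit. Unset Printing Implicit Defensive.
Import Order.TTheory GRing.Theory Num.Theory.
Local Open Scope ring_scope.
Local Open Scope classical_set_scope.

(* A metric simplicial tree, presented combinatorially:
   - V : vertices, E : oriented edges, P : points of the geometric realization;
   - o e : origin of e, rv e : reversed edge (so o (rv e) is the terminus);
   - len e > 0 : length of e;
   - vpt v : the point of the realization at the vertex v;
   - at_ e t : the point at distance t from o e along e (0 <= t <= len e). *)

Fixpoint is_path (V E : Type) (o : E -> V) (rv : E -> E) (u w : V) (p : seq E)
  : Prop :=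
  match p with
  | [::] => u = w
  | e :: p' => o e = u /\ is_path o rv (o (rv e)) w p'
  end.

Fixpoint reduced (E : Type) (rv : E -> E) (p : seq E) : Prop :=
  match p with
  | e :: ((e' :: _) as p') => e' <> rv e /\ reduced rv p'
  | _ => True
  end.

Definition metric_simplicial_tree (R : realType) (V E P : Type)
  (o : E -> V) (rv : E -> E) (len : E -> R) (vpt : V -> P)
  (at_ : E -> R -> P) : Prop :=
  [/\ (forall e, rv (rv e) = e) /\ (forall e, rv e <> e) /\
      (forall e, 0 < len e) /\ (forall e, len (rv e) = len e),
      (forall e, at_ e 0 = vpt (o e)) /\
      (forall e t, 0 <= t <= len e -> at_ (rv e) t = at_ e (len e - t)),
      injective vpt /\
      (forall e e' t t', 0 < t < len e -> 0 < t' < len e' ->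
          at_ e t = at_ e' t' ->
          (e = e' /\ t = t') \/ (e' = rv e /\ t' = len e - t)) /\
      (forall e t w, 0 < t < len e -> at_ e t <> vpt w),
      (forall u w, exists p, is_path o rv u w p) &
      (forall u p, is_path o rv u u p -> reduced rv p -> p = [::]) ].

(* ell({d1,d2}) for directions d1, d2 (given by edges e1, e2 issuing from a
   common vertex): the length of the longest initial segments of e1 and e2
   having the same image under F; +oo by convention when d1 = d2. *)
Definition turn_len (R : realType) (E : eqType) (P X : Type)
  (len : E -> R) (at_ : E -> R -> P) (F : P -> X) (e1 e2 : E) : \bar R :=
  if e1 == e2 then +oo%E
  else ereal_sup [set s%:E | s in
         [set s : R | 0 <= s /\ s <= Num.min (len e1) (len e2) /\
            (forall t, 0 <= t <= s -> F (at_ e1 t) = F (at_ e2 t))]].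

Definition illegal_turn (R : realType) (V : Type) (E : eqType) (P X : Type)
  (o : E -> V) (len : E -> R) (at_ : E -> R -> P) (F : P -> X) (v : V)
  (e1 e2 : E) : Prop :=
  o e1 = v /\ o e2 = v /\ (0 < turn_len len at_ F e1 e2)%E.

Definition same_gate (R : realType) (V : Type) (E : eqType) (P X : Type)
  (o : E -> V) (len : E -> R) (at_ : E -> R -> P) (F : P -> X) (v : V)
  (e1 e2 : E) : Prop :=
  o e1 = v /\ o e2 = v /\ clos_refl_sym_trans E (illegal_turn o len at_ F v) e1 e2.

From HB Require Import structures.
From mathcomp Require Import all_boot all_order all_algebra.
From mathcomp Require Import boolp classical_sets reals ereal.
From mathcomp Require Import lra.
Import Order.TTheory GRing.Theory Num.Theory.
Local Open Scope ring_scope.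

(* Having the same F-image on initial segments of length s is transitive, so if
   s is below every ell({d_(i-1), d_i}) then the initial segments of length s of
   d_0 and d_m have the same image, whence s <= ell({d_0, d_m}). *)

Lemma ge0_lee_of_fin_lt (R : realType) (a b : \bar R) : (0 <= b)%E ->
  (forall s : R, 0 <= s -> (s%:E < a)%E -> (s%:E <= b)%E) -> (a <= b)%E.
Proof.
case: b => [q | _ _ | //]; last exact: leey.
rewrite lee_fin => q_ge0 below_a; rewrite leNgt; apply/negP.
case: a below_a => [r | | //] below_a; rewrite ?lte_fin => q_lt_a.
- have mid_ge0 : 0 <= (q + r) / 2 by lra.
  have mid_lt_r : (q + r) / 2 < r by lra.
  have := below_a _ mid_ge0; rewrite !lte_fin lee_fin => /(_ mid_lt_r); lra.
- have succ_ge0 : 0 <= q + 1 by lra.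
  have := below_a _ succ_ge0 (ltey _); rewrite lee_fin; lra.
Qed.

Section TurnLength.
Variables (R : realType) (E : eqType) (P X : Type).
Variables (len : E -> R) (at_ : E -> R -> P) (F : P -> X).

Definition common_prefix (e1 e2 : E) (s : R) : Prop :=
  0 <= s /\ s <= Num.min (len e1) (len e2) /\
  (forall t, 0 <= t <= s -> F (at_ e1 t) = F (at_ e2 t)).

Definition agree_within (s : R) (e1 e2 : E) : Prop :=
  e1 = e2 \/ common_prefix e1 e2 s.

Lemma common_prefix_trans e1 e2 e3 s :
  common_prefix e1 e2 s -> common_prefix e2 e3 s -> common_prefix e1 e3 s.
Proof.
rewrite /common_prefix !le_min.
move=> [s_ge0 [/andP[s1 _] F12]] [_ [/andP[_ s3] F23]].
split=> //; split; first by rewrite s1 s3.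
by move=> t t_in; rewrite F12 // F23.
Qed.

Lemma agree_within_trans s e1 e2 e3 :
  agree_within s e1 e2 -> agree_within s e2 e3 -> agree_within s e1 e3.
Proof.
move=> [<- //|c12] [<-|c23]; right => //.
exact: common_prefix_trans c23.
Qed.

Lemma agree_within_chain s (m : nat) (d : nat -> E) :
  (forall i, (i < m)%N -> agree_within s (d i) (d i.+1)) ->
  agree_within s (d 0%N) (d m).
Proof.
move=> steps; elim: m steps => [|m IHm] steps; first by left.
apply: agree_within_trans (steps m (ltnSn m)).
by apply: IHm => i /ltnW; exact: steps.
Qed.

Lemma agree_within_le_turn_len s e1 e2 :
  agree_within s e1 e2 -> (s%:E <= turn_len len at_ F e1 e2)%E.
Proof.
rewrite /turn_len; case: eqP => [_ _|ne [//|prefix]]; first exact: leey.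
by apply: ereal_sup_ubound; exists s.
Qed.

Lemma lt_turn_len_agree_within s e1 e2 : 0 <= s ->
  (s%:E < turn_len len at_ F e1 e2)%E -> agree_within s e1 e2.
Proof.
rewrite /turn_len; case: eqP => [-> _ _|_ s_ge0]; first by left.
move=> /ereal_sup_gt [_ [x [_ [x_le F_eq] <-]]]; rewrite lte_fin => s_lt_x.
right; split=> //; split; first exact: le_trans (ltW s_lt_x) x_le.
move=> t /andP[t_ge0 t_le]; apply: F_eq.
by rewrite t_ge0 (le_trans t_le (ltW s_lt_x)).
Qed.

Lemma turn_len_ge0 e1 e2 : 0 <= len e1 -> 0 <= len e2 ->
  F (at_ e1 0) = F (at_ e2 0) -> (0 <= turn_len len at_ F e1 e2)%E.
Proof.
move=> len1 len2 F0; apply: agree_within_le_turn_len; right.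
split=> //; split; first by rewrite le_min len1 len2.
by move=> t; rewrite -eq_le => /eqP <-.
Qed.

Lemma bigmin_turn_len_le (m : nat) (d : nat -> E) :
  (0 <= turn_len len at_ F (d 0%N) (d m))%E ->
  (\big[Order.min/+oo%E]_(i < m) turn_len len at_ F (d i) (d i.+1)
     <= turn_len len at_ F (d 0%N) (d m))%E.
Proof.
move=> ends_ge0; apply: ge0_lee_of_fin_lt => // s s_ge0 s_lt_min.
apply/agree_within_le_turn_len/agree_within_chain => i i_lt_m.
apply: lt_turn_len_agree_within => //; apply: (lt_le_trans s_lt_min).
exact: (bigmin_le _ (Ordinal i_lt_m) _).
Qed.

End TurnLength.

Theorem lemma2p4 (R : realType) (V : Type) (E : eqType) (P X : Type)
  (o : E -> V) (rv : E -> E) (len : E -> R) (vpt : V -> P)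
  (at_ : E -> R -> P)
  (HT : metric_simplicial_tree o rv len vpt at_)
  (F : P -> X) (v : V) (m : nat) (d : nat -> E)
  (Hd : forall i, (i <= m)%N -> o (d i) = v)
  (Hgate : forall i j, (i <= m)%N -> (j <= m)%N ->
             same_gate o len at_ F v (d i) (d j)) :
  (\big[Order.min/+oo%E]_(i < m) turn_len len at_ F (d i) (d i.+1)
     <= turn_len len at_ F (d 0%N) (d m))%E.
Proof.
case: HT => [[_ [_ [len_gt0 _]]] [at_0 _] _ _ _].
apply: bigmin_turn_len_le; apply: turn_len_ge0; rewrite ?ltW //.
by rewrite !at_0 !Hd.
Qed.
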